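(* Let $F\colon\mathbb{A}\to\mathbb{B}$ be a double functor between double categories. Then $F$ is a double biequivalence if and only if both 2-functors $\mathbf{H}F\colon\mathbf{H}\mathbb{A}\to\mathbf{H}\mathbb{B}$ and $\mathcal{V}F\colon\mathcal{V}\mathbb{A}\to\mathcal{V}\mathbb{B}$ are biequivalences of 2-categories.
   Context: A double category has objects, horizontal morphisms, vertical morphisms and squares; a square $\alpha\colon(u\,{}^{a}_{b}\,v)$ has top horizontal boundary $a\colon A\to B$, bottom horizontal boundary $b\colon A'\to B'$, left vertical boundary $u\colon A\to A'$ and right vertical boundary $v\colon B\to B'$; compositions are strictly associative and unital and satisfy interchange; $e_A$ is the vertical identity on $A$; a square is vertically invertible if it is invertible for vertical composition. $\mathbf{H}\mathbb{A}$ is the underlying horizontal 2-category of $\mathbb{A}$: objects and horizontal morphisms of $\mathbb{A}$, and as 2-cells $a\Rightarrow b$ the squares $(e_A\,{}^{a}_{b}\,e_B)$. $\mathcal{V}\mathbb{A}$ is the 2-category whose objects are vertical morphisms $u\colon A\to A'$ of $\mathbb{A}$, whose morphisms $u\to v$ are squares with left boundary $u$ and right boundary $v$ (composed horizontally), and whose 2-cells from $\alpha\colon(u\,{}^{a}_{b}\,v)$ to $\beta\colon(u\,{}^{c}_{d}\,v)$ are pairs of squares $\sigma_0\colon(e_A\,{}^{a}_{c}\,e_B)$, $\sigma_1\colon(e_{A'}\,{}^{b}_{d}\,e_{B'})$ such that $\sigma_0$ vertically composed on top of $\beta$ equals $\alpha$ vertically composed on top of $\sigma_1$ (compositions of 2-cells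 componentwise). A horizontal morphism of $\mathbb{A}$ is a horizontal equivalence if it is an equivalence in $\mathbf{H}\mathbb{A}$; a square is weakly horizontally invertible if it is an equivalence in $\mathcal{V}\mathbb{A}$. A 2-functor $G\colon\mathcal{A}\to\mathcal{B}$ is a biequivalence if (b1) every object $B$ of $\mathcal{B}$ admits an object $A$ and an equivalence $B\to GA$; (b2) for every morphism $b\colon GA\to GC$ there is $a\colon A\to C$ and an invertible 2-cell $b\cong Ga$; (b3) for every 2-cell $\beta\colon Ga\Rightarrow Gc$ there is a unique 2-cell $\alpha\colon a\Rightarrow c$ with $G\alpha=\beta$. A double functor $F\colon\mathbb{A}\to\mathbb{B}$ is a double biequivalence if (db1) for every object $B\in\mathbb{B}$ there are an object $A\in\mathbb{A}$ and a horizontal equivalence $B\to FA$; (db2) for every horizontal morphism $b\colon FA\to FC$ in $\mathbb{B}$ there are a horizontal morphism $a\colon A\to C$ in $\mathbb{A}$ and a vertically invertible square $(e_{FA}\,{}^{b}_{Fa}\,e_{FC})$ in $\mathbb{B}$; (db3) for every vertical morphism $v\colon B\to B'$ in $\mathbb{B}$ there are a vertical morphism $u\colon A\to A'$ in $\mathbb{A}$ and a weakly horizontally invertible square in $\mathbb{B}$ with left boundary $v$, right boundary $Fu$ and horizontal boundaries horizontal equivalences $B\to FA$, $B'\to FA'$; (db4) for every square $\beta\colon(Fu\,{}^{Fa}_{Fc}\,Fu')$ in $\mathbb{B}$ there is a unique square $\alpha\colon(u\,{}^{a}_{c}\,u')$ in $\mathbb{A}$ with $F\alpha=\beta$. *)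

Unset Implicit Arguments.
Set Universe Polymorphism.

Definition sq_cast {O : Type} {H V : O -> O -> Type}
  (S : forall A B A' B', H A B -> H A' B' -> V A A' -> V B B' -> Type)
  {A B A' B' : O} {a a' : H A B} {b b' : H A' B'} {u u' : V A A'} {v v' : V B B'}
  (ea : a = a') (eb : b = b') (eu : u = u') (ev : v = v')
  (x : S A B A' B' a b u v) : S A B A' B' a' b' u' v' :=
  match ea in _ = a0 return S A B A' B' a0 b' u' v' with eq_refl =>
  match eb in _ = b0 return S A B A' B' a b0 u' v' with eq_refl =>
  match eu in _ = u0 return S A B A' B' a b u0 v' with eq_refl =>
  match ev in _ = v0 return S A B A' B' a b u v0 with eq_refl => x
  end end end end.

(** Composition is written in diagrammatic order:
    [hcomp a b] is "a then b".  A square [sq A B A' B' a b u v] has top [a : A -> B],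
    bottom [b : A' -> B'], left [u : A -> A'], right [v : B -> B']. *)
Record DoubleCat := {
  ob : Type;
  hom : ob -> ob -> Type;
  ver : ob -> ob -> Type;
  sq : forall A B A' B', hom A B -> hom A' B' -> ver A A' -> ver B B' -> Type;
  hid : forall A, hom A A;
  hcomp : forall A B C, hom A B -> hom B C -> hom A C;
  vid : forall A, ver A A;
  vcomp : forall A A' A'', ver A A' -> ver A' A'' -> ver A A'';
  shcomp : forall A B C A' B' C' (a : hom A B) (b : hom B C) (a' : hom A' B')
             (b' : hom B' C') (u : ver A A') (v : ver B B') (w : ver C C'),
      sq _ _ _ _ a a' u v -> sq _ _ _ _ b b' v w ->
      sq _ _ _ _ (hcomp _ _ _ a b) (hcomp _ _ _ a' b') u w;
  svcomp : forall A B A' B' A'' B'' (a : hom A B) (b : hom A' B') (c : hom A'' B'')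
             (u : ver A A') (v : ver B B') (u' : ver A' A'') (v' : ver B' B''),
      sq _ _ _ _ a b u v -> sq _ _ _ _ b c u' v' ->
      sq _ _ _ _ a c (vcomp _ _ _ u u') (vcomp _ _ _ v v');
  shid : forall A A' (u : ver A A'), sq _ _ _ _ (hid A) (hid A') u u;
  svid : forall A B (a : hom A B), sq _ _ _ _ a a (vid A) (vid B);
  hassoc : forall A B C D (a : hom A B) (b : hom B C) (c : hom C D),
      hcomp _ _ _ (hcomp _ _ _ a b) c = hcomp _ _ _ a (hcomp _ _ _ b c);
  hidl : forall A B (a : hom A B), hcomp _ _ _ (hid A) a = a;
  hidr : forall A B (a : hom A B), hcomp _ _ _ a (hid B) = a;
  vassoc : forall A B C D (a : ver A B) (b : ver B C) (c : ver C D),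
      vcomp _ _ _ (vcomp _ _ _ a b) c = vcomp _ _ _ a (vcomp _ _ _ b c);
  vidl : forall A B (a : ver A B), vcomp _ _ _ (vid A) a = a;
  vidr : forall A B (a : ver A B), vcomp _ _ _ a (vid B) = a;
  shassoc : forall A B C D A' B' C' D' (a : hom A B) (b : hom B C) (c : hom C D)
      (a' : hom A' B') (b' : hom B' C') (c' : hom C' D')
      (u : ver A A') (v : ver B B') (w : ver C C') (x : ver D D')
      (al : sq _ _ _ _ a a' u v) (be : sq _ _ _ _ b b' v w) (ga : sq _ _ _ _ c c' w x),
      sq_cast sq (hassoc _ _ _ _ a b c) (hassoc _ _ _ _ a' b' c') eq_refl eq_refl
        (shcomp _ _ _ _ _ _ _ _ _ _ _ _ _ (shcomp _ _ _ _ _ _ _ _ _ _ _ _ _ al be) ga)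
      = shcomp _ _ _ _ _ _ _ _ _ _ _ _ _ al (shcomp _ _ _ _ _ _ _ _ _ _ _ _ _ be ga);
  shidl : forall A B A' B' (a : hom A B) (a' : hom A' B') (u : ver A A') (v : ver B B')
      (al : sq _ _ _ _ a a' u v),
      sq_cast sq (hidl _ _ a) (hidl _ _ a') eq_refl eq_refl
        (shcomp _ _ _ _ _ _ _ _ _ _ _ _ _ (shid _ _ u) al) = al;
  shidr : forall A B A' B' (a : hom A B) (a' : hom A' B') (u : ver A A') (v : ver B B')
      (al : sq _ _ _ _ a a' u v),
      sq_cast sq (hidr _ _ a) (hidr _ _ a') eq_refl eq_refl
        (shcomp _ _ _ _ _ _ _ _ _ _ _ _ _ al (shid _ _ v)) = al;
  svassoc : forall A B A' B' A'' B'' A''' B''' (a : hom A B) (b : hom A' B')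
      (c : hom A'' B'') (d : hom A''' B''')
      (u : ver A A') (v : ver B B') (u' : ver A' A'') (v' : ver B' B'')
      (u'' : ver A'' A''') (v'' : ver B'' B''')
      (al : sq _ _ _ _ a b u v) (be : sq _ _ _ _ b c u' v') (ga : sq _ _ _ _ c d u'' v''),
      sq_cast sq eq_refl eq_refl (vassoc _ _ _ _ u u' u'') (vassoc _ _ _ _ v v' v'')
        (svcomp _ _ _ _ _ _ _ _ _ _ _ _ _ (svcomp _ _ _ _ _ _ _ _ _ _ _ _ _ al be) ga)
      = svcomp _ _ _ _ _ _ _ _ _ _ _ _ _ al (svcomp _ _ _ _ _ _ _ _ _ _ _ _ _ be ga);
  svidl : forall A B A' B' (a : hom A B) (b : hom A' B') (u : ver A A') (v : ver B B')
      (al : sq _ _ _ _ a b u v),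
      sq_cast sq eq_refl eq_refl (vidl _ _ u) (vidl _ _ v)
        (svcomp _ _ _ _ _ _ _ _ _ _ _ _ _ (svid _ _ a) al) = al;
  svidr : forall A B A' B' (a : hom A B) (b : hom A' B') (u : ver A A') (v : ver B B')
      (al : sq _ _ _ _ a b u v),
      sq_cast sq eq_refl eq_refl (vidr _ _ u) (vidr _ _ v)
        (svcomp _ _ _ _ _ _ _ _ _ _ _ _ _ al (svid _ _ b)) = al;
  interchange : forall A B C A' B' C' A'' B'' C''
      (a : hom A B) (a' : hom B C) (b : hom A' B') (b' : hom B' C')
      (c : hom A'' B'') (c' : hom B'' C'')
      (u : ver A A') (v : ver B B') (w : ver C C')
      (u' : ver A' A'') (v' : ver B' B'') (w' : ver C' C'')
      (al : sq _ _ _ _ a b u v) (be : sq _ _ _ _ a' b' v w)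
      (ga : sq _ _ _ _ b c u' v') (de : sq _ _ _ _ b' c' v' w'),
      svcomp _ _ _ _ _ _ _ _ _ _ _ _ _
        (shcomp _ _ _ _ _ _ _ _ _ _ _ _ _ al be) (shcomp _ _ _ _ _ _ _ _ _ _ _ _ _ ga de)
      = shcomp _ _ _ _ _ _ _ _ _ _ _ _ _
        (svcomp _ _ _ _ _ _ _ _ _ _ _ _ _ al ga) (svcomp _ _ _ _ _ _ _ _ _ _ _ _ _ be de);
  shid_vcomp : forall A A' A'' (u : ver A A') (u' : ver A' A''),
      shid _ _ (vcomp _ _ _ u u')
      = svcomp _ _ _ _ _ _ _ _ _ _ _ _ _ (shid _ _ u) (shid _ _ u');
  svid_hcomp : forall A B C (a : hom A B) (b : hom B C),
      svid _ _ (hcomp _ _ _ a b)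
      = shcomp _ _ _ _ _ _ _ _ _ _ _ _ _ (svid _ _ a) (svid _ _ b);
  shid_vid : forall A, shid _ _ (vid A) = svid _ _ (hid A)
}.

Arguments hom {_}. Arguments ver {_}. Arguments sq {_ _ _ _ _}.
Arguments hid {_}. Arguments hcomp {_ _ _ _}. Arguments vid {_}.
Arguments vcomp {_ _ _ _}.
Arguments shcomp {_ _ _ _ _ _ _ _ _ _ _ _ _ _}.
Arguments svcomp {_ _ _ _ _ _ _ _ _ _ _ _ _ _}.
Arguments shid {_ _ _}. Arguments svid {_ _ _}.
Arguments hassoc {_ _ _ _ _}. Arguments hidl {_ _ _}. Arguments hidr {_ _ _}.
Arguments vassoc {_ _ _ _ _}. Arguments vidl {_ _ _}. Arguments vidr {_ _ _}.

Notation cast := (sq_cast (@sq _)).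

Record DoubleFunctor (D E : DoubleCat) := {
  Fob : ob D -> ob E;
  Fh : forall A B, @hom D A B -> @hom E (Fob A) (Fob B);
  Fv : forall A A', @ver D A A' -> @ver E (Fob A) (Fob A');
  Fs : forall A B A' B' (a : hom A B) (b : hom A' B') (u : ver A A') (v : ver B B'),
      sq a b u v -> sq (Fh _ _ a) (Fh _ _ b) (Fv _ _ u) (Fv _ _ v);
  Fh_id : forall A, Fh _ _ (hid A) = hid (Fob A);
  Fh_comp : forall A B C (a : hom A B) (b : hom B C),
      Fh _ _ (hcomp a b) = hcomp (Fh _ _ a) (Fh _ _ b);
  Fv_id : forall A, Fv _ _ (vid A) = vid (Fob A);
  Fv_comp : forall A A' A'' (u : ver A A') (u' : ver A' A''),
      Fv _ _ (vcomp u u') = vcomp (Fv _ _ u) (Fv _ _ u');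
  Fs_hcomp : forall A B C A' B' C' (a : hom A B) (b : hom B C) (a' : hom A' B')
      (b' : hom B' C') (u : ver A A') (v : ver B B') (w : ver C C')
      (al : sq a a' u v) (be : sq b b' v w),
      cast (Fh_comp _ _ _ a b) (Fh_comp _ _ _ a' b') eq_refl eq_refl (Fs _ _ _ _ _ _ _ _ (shcomp al be))
      = shcomp (Fs _ _ _ _ _ _ _ _ al) (Fs _ _ _ _ _ _ _ _ be);
  Fs_vcomp : forall A B A' B' A'' B'' (a : hom A B) (b : hom A' B') (c : hom A'' B'')
      (u : ver A A') (v : ver B B') (u' : ver A' A'') (v' : ver B' B'')
      (al : sq a b u v) (be : sq b c u' v'),
      cast eq_refl eq_refl (Fv_comp _ _ _ u u') (Fv_comp _ _ _ v v') (Fs _ _ _ _ _ _ _ _ (svcomp al be))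
      = svcomp (Fs _ _ _ _ _ _ _ _ al) (Fs _ _ _ _ _ _ _ _ be);
  Fs_hid : forall A A' (u : ver A A'),
      cast (Fh_id A) (Fh_id A') eq_refl eq_refl (Fs _ _ _ _ _ _ _ _ (shid u))
      = shid (Fv _ _ u);
  Fs_vid : forall A B (a : hom A B),
      cast eq_refl eq_refl (Fv_id A) (Fv_id B) (Fs _ _ _ _ _ _ _ _ (svid a))
      = svid (Fh _ _ a)
}.

Arguments Fob {D E} d _.
Arguments Fh {D E} d {A B}.
Arguments Fv {D E} d {A A'}.
Arguments Fs {D E} d {A B A' B' a b u v}.
Arguments Fh_id {D E} d A.
Arguments Fv_id {D E} d A.

Section TwoCells.
Variable D : DoubleCat.

(** The underlying horizontal 2-category H D: 2-cells [a => b] are squares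
    with identity vertical boundaries; their (vertical) composite and identity. *)
Definition cellH {A B : ob D} (a b : hom A B) : Type := sq a b (vid A) (vid B).

Definition cellH_comp {A B : ob D} {a b c : hom A B}
  (s : cellH a b) (t : cellH b c) : cellH a c :=
  cast eq_refl eq_refl (vidl (vid A)) (vidl (vid B)) (svcomp s t).

Definition cellH_id {A B : ob D} (a : hom A B) : cellH a a := svid a.

Definition invH {A B : ob D} {a b : hom A B} (s : cellH a b) : Prop :=
  exists t : cellH b a, cellH_comp s t = cellH_id a /\ cellH_comp t s = cellH_id b.

Definition hequiv {A B : ob D} (a : hom A B) : Prop :=
  exists g : hom B A,
    (exists s : cellH (hid A) (hcomp a g), invH s) /\
    (exists t : cellH (hcomp g a) (hid B), invH t).

(** The 2-category V D: objects are vertical morphisms, morphisms [u -> v] are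
    squares with left boundary [u] and right boundary [v], composed with
    [shcomp], identity [shid u]; a 2-cell from [al : sq a b u v] to
    [be : sq c d u v] is a pair [(s0, s1)] of 2-cells of H D satisfying the
    compatibility condition [isV2]. *)
Definition isV2 {A B A' B' : ob D} {u : ver A A'} {v : ver B B'}
  {a c : hom A B} {b d : hom A' B'} (al : sq a b u v) (be : sq c d u v)
  (s0 : cellH a c) (s1 : cellH b d) : Prop :=
  cast eq_refl eq_refl (vidl u) (vidl v) (svcomp s0 be)
  = cast eq_refl eq_refl (vidr u) (vidr v) (svcomp al s1).

(** invertible 2-cell of V D (2-cells compose componentwise) *)
Definition invV {A B A' B' : ob D} {u : ver A A'} {v : ver B B'}
  {a c : hom A B} {b d : hom A' B'} (al : sq a b u v) (be : sq c d u v)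
  (s0 : cellH a c) (s1 : cellH b d) : Prop :=
  isV2 al be s0 s1 /\
  exists (t0 : cellH c a) (t1 : cellH d b),
    isV2 be al t0 t1 /\
    cellH_comp s0 t0 = cellH_id a /\ cellH_comp t0 s0 = cellH_id c /\
    cellH_comp s1 t1 = cellH_id b /\ cellH_comp t1 s1 = cellH_id d.

(** weakly horizontally invertible square = equivalence in V D *)
Definition weak_hinv {A B A' B' : ob D} {a : hom A B} {b : hom A' B'}
  {u : ver A A'} {v : ver B B'} (al : sq a b u v) : Prop :=
  exists (c : hom B A) (d : hom B' A') (be : sq c d v u),
    (exists (s0 : cellH (hid A) (hcomp a c)) (s1 : cellH (hid A') (hcomp b d)),
        invV (shid u) (shcomp al be) s0 s1) /\
    (exists (t0 : cellH (hcomp c a) (hid B)) (t1 : cellH (hcomp d b) (hid B')),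
        invV (shcomp be al) (shid v) t0 t1).

End TwoCells.

Arguments cellH {D A B}.
Arguments cellH_comp {D A B a b c}.
Arguments cellH_id {D A B}.
Arguments invH {D A B a b}.
Arguments hequiv {D A B}.
Arguments isV2 {D A B A' B' u v a c b d}.
Arguments invV {D A B A' B' u v a c b d}.
Arguments weak_hinv {D A B A' B' a b u v}.

Section Biequivalences.
Variables (D E : DoubleCat) (F : DoubleFunctor D E).

(** action of the 2-functor H F (and V F, componentwise) on 2-cells *)
Definition HF2 {A C : ob D} {a c : hom A C} (s : cellH a c) : cellH (Fh F a) (Fh F c) :=
  cast eq_refl eq_refl (Fv_id F A) (Fv_id F C) (Fs F s).

Definition HF_biequivalence : Prop :=
  (forall B : ob E, exists (A : ob D) (b : hom B (Fob F A)), hequiv b) /\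
  (forall (A C : ob D) (b : hom (Fob F A) (Fob F C)),
      exists (a : hom A C) (s : cellH b (Fh F a)), invH s) /\
  (forall (A C : ob D) (a c : hom A C) (be : cellH (Fh F a) (Fh F c)),
      exists! al : cellH a c, HF2 al = be).

(** V F : V D -> V E is a biequivalence (V F sends [u] to [Fv F u], a square
    [al] to [Fs F al], and a 2-cell [(s0, s1)] to [(HF2 s0, HF2 s1)]) *)
Definition VF_biequivalence : Prop :=
  (forall (B B' : ob E) (v : ver B B'),
      exists (A A' : ob D) (u : ver A A') (b : hom B (Fob F A)) (b' : hom B' (Fob F A'))
             (be : sq b b' v (Fv F u)), weak_hinv be) /\
  (forall (A A' C C' : ob D) (u : ver A A') (u' : ver C C')
          (b : hom (Fob F A) (Fob F C)) (d : hom (Fob F A') (Fob F C'))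
          (be : sq b d (Fv F u) (Fv F u')),
      exists (a : hom A C) (c : hom A' C') (al : sq a c u u')
             (s0 : cellH b (Fh F a)) (s1 : cellH d (Fh F c)),
        invV be (Fs F al) s0 s1) /\
  (forall (A A' C C' : ob D) (u : ver A A') (u' : ver C C')
          (a a' : hom A C) (c c' : hom A' C')
          (al : sq a c u u') (ga : sq a' c' u u')
          (s0 : cellH (Fh F a) (Fh F a')) (s1 : cellH (Fh F c) (Fh F c')),
      isV2 (Fs F al) (Fs F ga) s0 s1 ->
      exists (t0 : cellH a a') (t1 : cellH c c'),
        (isV2 al ga t0 t1 /\ HF2 t0 = s0 /\ HF2 t1 = s1) /\
        (forall (t0' : cellH a a') (t1' : cellH c c'),
            isV2 al ga t0' t1' -> HF2 t0' = s0 -> HF2 t1' = s1 ->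
            t0' = t0 /\ t1' = t1)).

Definition double_biequivalence : Prop :=
  (forall B : ob E, exists (A : ob D) (b : hom B (Fob F A)), hequiv b) /\
  (forall (A C : ob D) (b : hom (Fob F A) (Fob F C)),
      exists (a : hom A C) (s : sq b (Fh F a) (vid (Fob F A)) (vid (Fob F C))), invH s) /\
  (forall (B B' : ob E) (v : ver B B'),
      exists (A A' : ob D) (u : ver A A') (b : hom B (Fob F A)) (b' : hom B' (Fob F A'))
             (be : sq b b' v (Fv F u)),
        hequiv b /\ hequiv b' /\ weak_hinv be) /\
  (forall (A A' C C' : ob D) (u : ver A A') (u' : ver C C') (a : hom A C) (c : hom A' C')
          (be : sq (Fh F a) (Fh F c) (Fv F u) (Fv F u')),
      exists! al : sq a c u u', Fs F al = be).

End Biequivalences.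

Arguments HF2 {D E} F {A C a c}.
Arguments HF_biequivalence {D E} F.
Arguments VF_biequivalence {D E} F.
Arguments double_biequivalence {D E} F.

(** Conditions (db1)/(b1 of H F) and (db2)/(b2 of H F) are
   literally the same, so the content lies in comparing the remaining ones.
   The single tool is the action of 2-cells of H D on squares by vertical
   composition on top ([lact]) and on the bottom ([ract]); this action is
   associative, unital and commutes with F.  Then:
   - (db4) says F is bijective on squares with fixed boundaries; restricted to
     identity vertical boundaries it gives (b3) of H F, and, since V-2-cells
     are pairs (s0, s1) with [lact s0 be = ract al s1], also (b3) of V F;
   - (db2) + (db4) give (b2) of V F: conjugate a square by the invertible
     2-cells from (db2) and lift it along F;
   - (b1) of V F gives (db3) because the horizontal boundaries of a weakly
     horizontally invertible square are horizontal equivalences;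
   - (b2) + (b3) of V F together with (b3) of H F give (db4): lift up to
     invertible 2-cells, correct the lift by whiskering, and get uniqueness
     by lifting the identity V-2-cell between two lifts. *)

From Stdlib Require Import ProofIrrelevance.

Section Casts.
Context {D : DoubleCat}.

Lemma cast_ext {A B A' B' : ob D} {a a' : hom A B} {b b' : hom A' B'}
  {u u' : ver A A'} {v v' : ver B B'} (ea ea' : a = a') (eb eb' : b = b')
  (eu eu' : u = u') (ev ev' : v = v') (x : sq a b u v) :
  cast ea eb eu ev x = cast ea' eb' eu' ev' x.
Proof.
  rewrite (proof_irrelevance _ ea ea'), (proof_irrelevance _ eb eb'),
    (proof_irrelevance _ eu eu'), (proof_irrelevance _ ev ev').
  reflexivity.
Qed.

Lemma cast_id {A B A' B' : ob D} {a : hom A B} {b : hom A' B'}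
  {u : ver A A'} {v : ver B B'} (ea : a = a) (eb : b = b)
  (eu : u = u) (ev : v = v) (x : sq a b u v) : cast ea eb eu ev x = x.
Proof. exact (cast_ext ea eq_refl eb eq_refl eu eq_refl ev eq_refl x). Qed.

Lemma cast_cast {A B A' B' : ob D} {a a' a'' : hom A B} {b b' b'' : hom A' B'}
  {u u' u'' : ver A A'} {v v' v'' : ver B B'} (ea : a' = a'') (eb : b' = b'')
  (eu : u' = u'') (ev : v' = v'') (ea' : a = a') (eb' : b = b')
  (eu' : u = u') (ev' : v = v') (x : sq a b u v) :
  cast ea eb eu ev (cast ea' eb' eu' ev' x) =
  cast (eq_trans ea' ea) (eq_trans eb' eb) (eq_trans eu' eu) (eq_trans ev' ev) x.
Proof. destruct ea, eb, eu, ev, ea', eb', eu', ev'. reflexivity. Qed.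

Lemma cast_sym {A B A' B' : ob D} {a a' : hom A B} {b b' : hom A' B'}
  {u u' : ver A A'} {v v' : ver B B'} (ea : a = a') (eb : b = b')
  (eu : u = u') (ev : v = v') (x : sq a b u v) (y : sq a' b' u' v') :
  cast ea eb eu ev x = y -> x = cast (eq_sym ea) (eq_sym eb) (eq_sym eu) (eq_sym ev) y.
Proof. destruct ea, eb, eu, ev. simpl. auto. Qed.

Lemma svcomp_castl {A B A' B' A'' B'' : ob D} {a : hom A B} {b : hom A' B'} {c : hom A'' B''}
  {u1 u2 : ver A A'} {v1 v2 : ver B B'} {u' : ver A' A''} {v' : ver B' B''}
  (eu : u1 = u2) (ev : v1 = v2) (x : sq a b u1 v1) (y : sq b c u' v') :
  svcomp (cast eq_refl eq_refl eu ev x) y =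
  cast eq_refl eq_refl (f_equal (fun z => vcomp z u') eu) (f_equal (fun z => vcomp z v') ev)
    (svcomp x y).
Proof. destruct eu, ev. reflexivity. Qed.

Lemma svcomp_castr {A B A' B' A'' B'' : ob D} {a : hom A B} {b : hom A' B'} {c : hom A'' B''}
  {u : ver A A'} {v : ver B B'} {u1 u2 : ver A' A''} {v1 v2 : ver B' B''}
  (eu : u1 = u2) (ev : v1 = v2) (x : sq a b u v) (y : sq b c u1 v1) :
  svcomp x (cast eq_refl eq_refl eu ev y) =
  cast eq_refl eq_refl (f_equal (fun z => vcomp u z) eu) (f_equal (fun z => vcomp v z) ev)
    (svcomp x y).
Proof. destruct eu, ev. reflexivity. Qed.

(** Associativity of vertical composition, oriented for rewriting left to right. *)
Lemma svassoc_r {A B A' B' A'' B'' A''' B''' : ob D} {a : hom A B} {b : hom A' B'}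
  {c : hom A'' B''} {d : hom A''' B'''}
  {u : ver A A'} {v : ver B B'} {u' : ver A' A''} {v' : ver B' B''}
  {u'' : ver A'' A'''} {v'' : ver B'' B'''}
  (al : sq a b u v) (be : sq b c u' v') (ga : sq c d u'' v'') :
  svcomp al (svcomp be ga) =
  cast eq_refl eq_refl (vassoc u u' u'') (vassoc v v' v'') (svcomp (svcomp al be) ga).
Proof. symmetry. apply (svassoc D). Qed.

End Casts.

Section FunctorCasts.
Context {D E : DoubleCat} (F : DoubleFunctor D E).

Lemma Fs_cast {A B A' B' : ob D} {a : hom A B} {b : hom A' B'}
  {u u' : ver A A'} {v v' : ver B B'} (eu : u = u') (ev : v = v') (x : sq a b u v) :
  Fs F (cast eq_refl eq_refl eu ev x) =
  cast eq_refl eq_refl (f_equal (Fv F) eu) (f_equal (Fv F) ev) (Fs F x).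
Proof. destruct eu, ev. reflexivity. Qed.

(** [Fs_vcomp] solved for [Fs F (svcomp al be)], for rewriting. *)
Lemma Fs_svcomp {A B A' B' A'' B'' : ob D} {a : hom A B} {b : hom A' B'} {c : hom A'' B''}
  {u : ver A A'} {v : ver B B'} {u' : ver A' A''} {v' : ver B' B''}
  (al : sq a b u v) (be : sq b c u' v') :
  Fs F (svcomp al be) = cast eq_refl eq_refl (eq_sym (Fv_comp D E F _ _ _ u u'))
    (eq_sym (Fv_comp D E F _ _ _ v v')) (svcomp (Fs F al) (Fs F be)).
Proof. exact (cast_sym _ _ _ _ _ _ (Fs_vcomp D E F _ _ _ _ _ _ _ _ _ _ _ _ _ al be)). Qed.

End FunctorCasts.

Section Whiskering.
Context {D : DoubleCat}.

Definition lact {A B A' B' : ob D} {a c : hom A B} {d : hom A' B'}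
  {u : ver A A'} {v : ver B B'} (s : cellH a c) (Y : sq c d u v) : sq a d u v :=
  cast eq_refl eq_refl (vidl u) (vidl v) (svcomp s Y).

Definition ract {A B A' B' : ob D} {a : hom A B} {b d : hom A' B'}
  {u : ver A A'} {v : ver B B'} (Y : sq a b u v) (t : cellH b d) : sq a d u v :=
  cast eq_refl eq_refl (vidr u) (vidr v) (svcomp Y t).

Lemma isV2_iff {A B A' B' : ob D} {u : ver A A'} {v : ver B B'}
  {a c : hom A B} {b d : hom A' B'} (al : sq a b u v) (be : sq c d u v)
  (s0 : cellH a c) (s1 : cellH b d) : isV2 al be s0 s1 <-> lact s0 be = ract al s1.
Proof. split; trivial. Qed.

End Whiskering.

(** Push all casts outward, then identify the remaining casts of equal squares. *)
Ltac normalize_casts :=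
  unfold lact, ract, cellH_comp, HF2;
  repeat rewrite ?Fs_cast, ?Fs_svcomp, ?svcomp_castl, ?svcomp_castr, ?cast_cast;
  apply cast_ext.

Section WhiskeringLaws.
Context {D : DoubleCat}.

Lemma lact_comp {A B A' B' : ob D} {a b c : hom A B} {d : hom A' B'}
  {u : ver A A'} {v : ver B B'} (s : cellH a b) (t : cellH b c) (Y : sq c d u v) :
  lact s (lact t Y) = lact (cellH_comp s t) Y.
Proof. unfold lact, cellH_comp. rewrite svcomp_castr, svassoc_r. normalize_casts. Qed.

Lemma ract_comp {A B A' B' : ob D} {a : hom A B} {b c d : hom A' B'}
  {u : ver A A'} {v : ver B B'} (Y : sq a b u v) (s : cellH b c) (t : cellH c d) :
  ract (ract Y s) t = ract Y (cellH_comp s t).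
Proof. unfold ract, cellH_comp. rewrite svcomp_castr, svassoc_r. normalize_casts. Qed.

Lemma lact_ract {A B A' B' : ob D} {a c : hom A B} {b d : hom A' B'}
  {u : ver A A'} {v : ver B B'} (s : cellH a c) (Y : sq c b u v) (t : cellH b d) :
  lact s (ract Y t) = ract (lact s Y) t.
Proof. unfold lact, ract. rewrite svcomp_castr, svassoc_r. normalize_casts. Qed.

Lemma lact_id {A B A' B' : ob D} {a : hom A B} {d : hom A' B'}
  {u : ver A A'} {v : ver B B'} (Y : sq a d u v) : lact (cellH_id a) Y = Y.
Proof. apply (svidl D). Qed.

Lemma ract_id {A B A' B' : ob D} {a : hom A B} {d : hom A' B'}
  {u : ver A A'} {v : ver B B'} (Y : sq a d u v) : ract Y (cellH_id d) = Y.
Proof. apply (svidr D). Qed.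

End WhiskeringLaws.

Section WeakInverses.
Context {D : DoubleCat}.

(** The horizontal boundaries of a weakly horizontally invertible square are
    horizontal equivalences: the two components of the unit and counit
    V-equivalences are invertible 2-cells of H D. *)
Lemma weak_hinv_hequiv {A B A' B' : ob D} {a : hom A B} {b : hom A' B'}
  {u : ver A A'} {v : ver B B'} (al : sq a b u v) :
  weak_hinv al -> hequiv a /\ hequiv b.
Proof.
  intros [c [d [_ [[s0 [s1 [_ [t0 [t1 [_ Hst]]]]]] [p0 [p1 [_ [q0 [q1 [_ Hpq]]]]]]]]]].
  split.
  - exists c. split; [exists s0, t0 | exists p0, q0]; tauto.
  - exists d. split; [exists s1, t1 | exists p1, q1]; tauto.
Qed.

End WeakInverses.

Section FunctorWhiskering.
Context {D E : DoubleCat} (F : DoubleFunctor D E).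

Lemma Fs_lact {A B A' B' : ob D} {a c : hom A B} {d : hom A' B'}
  {u : ver A A'} {v : ver B B'} (s : cellH a c) (Y : sq c d u v) :
  Fs F (lact s Y) = lact (HF2 F s) (Fs F Y).
Proof. normalize_casts. Qed.

Lemma Fs_ract {A B A' B' : ob D} {a : hom A B} {b d : hom A' B'}
  {u : ver A A'} {v : ver B B'} (Y : sq a b u v) (t : cellH b d) :
  Fs F (ract Y t) = ract (Fs F Y) (HF2 F t).
Proof. normalize_casts. Qed.

Lemma HF2_id {A B : ob D} (a : hom A B) : HF2 F (cellH_id a) = cellH_id (Fh F a).
Proof. apply (Fs_vid D E F). Qed.

End FunctorWhiskering.

Section Comparison.
Context {D E : DoubleCat} (F : DoubleFunctor D E).

Definition squares_bijective : Prop :=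
  forall (A A' C C' : ob D) (u : ver A A') (u' : ver C C') (a : hom A C) (c : hom A' C')
         (be : sq (Fh F a) (Fh F c) (Fv F u) (Fv F u')),
    exists! al : sq a c u u', Fs F al = be.

Definition HF_cells_bijective : Prop :=
  forall (A C : ob D) (a c : hom A C) (be : cellH (Fh F a) (Fh F c)),
    exists! al : cellH a c, HF2 F al = be.

Definition HF_hom_lifts : Prop :=
  forall (A C : ob D) (b : hom (Fob F A) (Fob F C)),
    exists (a : hom A C) (s : cellH b (Fh F a)), invH s.

Definition VF_squares_lift : Prop :=
  forall (A A' C C' : ob D) (u : ver A A') (u' : ver C C')
          (b : hom (Fob F A) (Fob F C)) (d : hom (Fob F A') (Fob F C'))
          (be : sq b d (Fv F u) (Fv F u')),
      exists (a : hom A C) (c : hom A' C') (al : sq a c u u')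
             (s0 : cellH b (Fh F a)) (s1 : cellH d (Fh F c)),
        invV be (Fs F al) s0 s1.

Definition VF_cells_bijective : Prop :=
  forall (A A' C C' : ob D) (u : ver A A') (u' : ver C C')
          (a a' : hom A C) (c c' : hom A' C')
          (al : sq a c u u') (ga : sq a' c' u u')
          (s0 : cellH (Fh F a) (Fh F a')) (s1 : cellH (Fh F c) (Fh F c')),
      isV2 (Fs F al) (Fs F ga) s0 s1 ->
      exists (t0 : cellH a a') (t1 : cellH c c'),
        (isV2 al ga t0 t1 /\ HF2 F t0 = s0 /\ HF2 F t1 = s1) /\
        (forall (t0' : cellH a a') (t1' : cellH c c'),
            isV2 al ga t0' t1' -> HF2 F t0' = s0 -> HF2 F t1' = s1 ->
            t0' = t0 /\ t1' = t1).

Lemma Fs_inj (HF4 : squares_bijective) {A A' C C' : ob D} {u : ver A A'} {u' : ver C C'}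
  {a : hom A C} {c : hom A' C'} (al al' : sq a c u u') :
  Fs F al = Fs F al' -> al = al'.
Proof.
  intros Heq. destruct (HF4 _ _ _ _ u u' a c (Fs F al)) as [x [_ Hx]].
  transitivity x; [symmetry |]; apply Hx; auto.
Qed.

Lemma HF2_inj (H3 : HF_cells_bijective) {A C : ob D} {a c : hom A C} (s t : cellH a c) :
  HF2 F s = HF2 F t -> s = t.
Proof.
  intros Heq. destruct (H3 _ _ _ _ (HF2 F t)) as [x [_ Hx]].
  transitivity x; [symmetry |]; apply Hx; auto.
Qed.

(** (db4) implies (b3) for H F: 2-cells of H are squares with identity
    vertical boundaries, which F sends to identities up to a cast. *)
Lemma HF_cells_of_squares : squares_bijective -> HF_cells_bijective.
Proof.
  intros HF4 A C a c be.
  destruct (HF4 _ _ _ _ (vid A) (vid C) a c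
    (cast eq_refl eq_refl (eq_sym (Fv_id F A)) (eq_sym (Fv_id F C)) be)) as [x [Hx _]].
  assert (Hlift : HF2 F x = be) by (unfold HF2; rewrite Hx, cast_cast, cast_id; reflexivity).
  exists x. split; [exact Hlift |].
  intros y Hy. apply (Fs_inj HF4). unfold HF2 in Hlift, Hy.
  apply cast_sym in Hlift. apply cast_sym in Hy. rewrite Hlift, Hy. apply cast_ext.
Qed.

(** (db4) implies (b3) for V F: lift both components along H F; the lifted
    pair is a V-2-cell because F reflects equality of whiskered squares. *)
Lemma VF_cells_of_squares : squares_bijective -> VF_cells_bijective.
Proof.
  intros HF4 A A' C C' u u' a a' c c' al ga s0 s1 HV.
  pose proof (HF_cells_of_squares HF4) as H3.
  destruct (H3 _ _ _ _ s0) as [t0 [Ht0 _]]. destruct (H3 _ _ _ _ s1) as [t1 [Ht1 _]].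
  exists t0, t1. split.
  - split; [| tauto]. apply isV2_iff, (Fs_inj HF4).
    rewrite (Fs_lact F), (Fs_ract F), Ht0, Ht1. exact HV.
  - intros t0' t1' _ E0 E1. split; apply (HF2_inj H3); congruence.
Qed.

(** (db2) + (db4) imply (b2) for V F: whisker a square between images by the
    inverse of the top comparison cell and by the bottom one, and lift it. *)
Lemma VF_lift_of_squares : HF_hom_lifts -> squares_bijective -> VF_squares_lift.
Proof.
  intros H2 HF4 A A' C C' u u' b d be.
  destruct (H2 A C b) as [a [s0 [r0 [Hs0r0 Hr0s0]]]].
  destruct (H2 A' C' d) as [c [s1 [r1 [Hs1r1 Hr1s1]]]].
  destruct (HF4 _ _ _ _ u u' a c (lact r0 (ract be s1))) as [al [Hal _]].
  exists a, c, al, s0, s1. split.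
  - apply isV2_iff. rewrite Hal, lact_comp, Hs0r0, lact_id. reflexivity.
  - exists r0, r1. split; [| tauto].
    apply isV2_iff. rewrite Hal, <- lact_ract, ract_comp, Hs1r1, ract_id. reflexivity.
Qed.

(** (b2) for V F and (b3) for H F give surjectivity in (db4): a lift up to
    an invertible V-2-cell is corrected by whiskering with lifted 2-cells. *)
Lemma squares_surjective_of_VF (H3 : HF_cells_bijective)
  (V2 : VF_squares_lift)
  {A A' C C' : ob D} {u : ver A A'} {u' : ver C C'} {a : hom A C} {c : hom A' C'}
  (be : sq (Fh F a) (Fh F c) (Fv F u) (Fv F u')) :
  exists al : sq a c u u', Fs F al = be.
Proof.
  destruct (V2 _ _ _ _ u u' _ _ be) as [a0 [c0 [al0 [s0 [s1 [HV [_ [r1 [_ [_ [_ [Hs1r1 _]]]]]]]]]]]].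
  destruct (H3 _ _ _ _ s0) as [q0 [Hq0 _]].
  destruct (H3 _ _ _ _ r1) as [p1 [Hp1 _]].
  exists (lact q0 (ract al0 p1)).
  rewrite (Fs_lact F), (Fs_ract F), Hq0, Hp1.
  rewrite lact_ract, (proj1 (isV2_iff _ _ _ _) HV), ract_comp, Hs1r1, ract_id. reflexivity.
Qed.

(** (b3) for V F and (b3) for H F give injectivity in (db4): the identity
    V-2-cell between the images of two squares lifts to a V-2-cell made of
    identities, which forces the squares to be equal. *)
Lemma squares_injective_of_VF (H3 : HF_cells_bijective)
  (V3 : VF_cells_bijective)
  {A A' C C' : ob D} {u : ver A A'} {u' : ver C C'} {a : hom A C} {c : hom A' C'}
  (al al' : sq a c u u') :
  Fs F al = Fs F al' -> al = al'.
Proof.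
  intros Heq.
  assert (HVid : isV2 (Fs F al) (Fs F al') (cellH_id (Fh F a)) (cellH_id (Fh F c)))
    by (apply isV2_iff; rewrite lact_id, ract_id; symmetry; exact Heq).
  destruct (V3 _ _ _ _ u u' a a c c al al' _ _ HVid) as [t0 [t1 [[HV [Ht0 Ht1]] _]]].
  rewrite <- (HF2_id F a) in Ht0. rewrite <- (HF2_id F c) in Ht1.
  apply (HF2_inj H3) in Ht0. apply (HF2_inj H3) in Ht1. subst t0 t1.
  pose proof (proj1 (isV2_iff _ _ _ _) HV) as Hwhisk.
  rewrite lact_id, ract_id in Hwhisk. symmetry. exact Hwhisk.
Qed.

End Comparison.

Theorem proposition3p12 (D E : DoubleCat) (F : DoubleFunctor D E) :
  double_biequivalence F <-> (HF_biequivalence F /\ VF_biequivalence F).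
Proof.
  split.
  - intros [H1 [H2 [H3 H4]]]. split; [split; [| split] | split; [| split]].
    + exact H1.
    + exact H2.
    + exact (HF_cells_of_squares F H4).
    + intros B B' v. destruct (H3 B B' v) as [A [A' [u [b [b' [be [_ [_ Hw]]]]]]]].
      exists A, A', u, b, b', be. exact Hw.
    + exact (VF_lift_of_squares F H2 H4).
    + exact (VF_cells_of_squares F H4).
  - intros [[H1 [H2 H3]] [V1 [V2 V3]]]. split; [exact H1 | split; [exact H2 | split]].
    + intros B B' v. destruct (V1 B B' v) as [A [A' [u [b [b' [be Hw]]]]]].
      destruct (weak_hinv_hequiv be Hw) as [Hb Hb'].
      exists A, A', u, b, b', be. tauto.
    + intros A A' C C' u u' a c be.
      destruct (squares_surjective_of_VF F H3 V2 be) as [al Hal].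
      exists al. split; [exact Hal |].
      intros al' Hal'. apply (squares_injective_of_VF F H3 V3). congruence.
Qed.
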